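(* Let $(X,\sigma)$ be a mixing one-sided or two-sided synchronizing subshift, let $z,z'\in X$ be distinct and let $\delta>0$. Then there is a dense Mycielski set $S\subset X$ which is syndetically scrambled for $\sigma$ and such that: (i) $\sigma^k(S)\subset S$ for some $k\in\mathbb N$; (ii) for any two distinct $x,x'\in S$ there is an infinite set $M\subset\mathbb N$ with $d(z,\sigma^n(x))<\delta$ and $d(z',\sigma^n(x'))<\delta$ for all $n\in M$.
   Context: Subshift $X\subset\mathcal A^{\mathbb N_0}$ or $\mathcal A^{\mathbb Z}$ over a finite alphabet, with metric $d(x,y)=2^{-k}$ where $k$ is maximal with $x_{[0,k)}=y_{[0,k)}$ (resp. $x_{(-k,k)}=y_{(-k,k)}$). $L(X)$ is the set of finite words appearing in points of $X$. A nonempty word $s\in L(X)$ is synchronizing if $us,sv\in L(X)$ imply $usv\in L(X)$; a synchronizing subshift is a transitive subshift with a synchronizing word. Mixing: $\{n:\sigma^n(U)\cap V\ne\emptyset\}$ cofinite for all nonempty open $U,V$. Syndetic: a subset of $\mathbb N$ meeting every set containing arbitrarily long runs of consecutive integers. $\mathrm{Asy}$, $\mathrm{SProx}$: pairs with $d(\sigma^nx,\sigma^ny)\to0$, resp. with $\{n:d(\sigma^nx,\sigma^ny)<\varepsilon\}$ syndetic for every $\varepsilon>0$. Syndetically scrambled set: at least two points, all distinct pairs in $\mathrm{SProx}\setminus\mathrm{Asy}$. Mycielski set: countable union of Cantor sets. *)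

From Stdlib Require Import Reals List ZArith ClassicalEpsilon.
Import ListNotations.
Open Scope R_scope.

Definition open_in {T : Type} (d : T -> T -> R) (X U : T -> Prop) : Prop :=
  (forall x, U x -> X x) /\
  (forall x, U x -> exists e, e > 0 /\ forall y, X y -> d x y < e -> U y).

Definition closed_set {T : Type} (d : T -> T -> R) (X : T -> Prop) : Prop :=
  forall x, (forall e, e > 0 -> exists y, X y /\ d x y < e) -> X x.

Definition nonempty {T : Type} (U : T -> Prop) : Prop := exists x, U x.

Definition hits {T : Type} (f : T -> T) (U V : T -> Prop) (n : nat) : Prop :=
  exists x, U x /\ V (Nat.iter n f x).

Definition transitive {T : Type} (d : T -> T -> R) (f : T -> T) (X : T -> Prop) : Prop :=
  forall U V, open_in d X U -> open_in d X V -> nonempty U -> nonempty V ->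
    exists n, hits f U V n.

Definition mixing {T : Type} (d : T -> T -> R) (f : T -> T) (X : T -> Prop) : Prop :=
  forall U V, open_in d X U -> open_in d X V -> nonempty U -> nonempty V ->
    exists N, forall n, (N <= n)%nat -> hits f U V n.

Definition thick (B : nat -> Prop) : Prop :=
  forall L : nat, exists m, forall j, (j < L)%nat -> B (m + j)%nat.

Definition syndetic (A : nat -> Prop) : Prop :=
  forall B, thick B -> exists n, A n /\ B n.

Definition infinite_nat (M : nat -> Prop) : Prop :=
  forall N, exists n, (N <= n)%nat /\ M n.

Definition asymptotic {T : Type} (d : T -> T -> R) (f : T -> T) (x y : T) : Prop :=
  forall e, e > 0 -> exists N, forall n, (N <= n)%nat ->
    d (Nat.iter n f x) (Nat.iter n f y) < e.

Definition synd_proximal {T : Type} (d : T -> T -> R) (f : T -> T) (x y : T) : Prop :=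
  forall e, e > 0 -> syndetic (fun n => d (Nat.iter n f x) (Nat.iter n f y) < e).

Definition synd_scrambled {T : Type} (d : T -> T -> R) (f : T -> T) (S : T -> Prop) : Prop :=
  (exists x y, S x /\ S y /\ x <> y) /\
  (forall x y, S x -> S y -> x <> y -> synd_proximal d f x y /\ ~ asymptotic d f x y).

Definition agree_cantor (k : nat) (p q : nat -> bool) : Prop :=
  forall i, (i < k)%nat -> p i = q i.

(* C is homeomorphic (via h) to the Cantor space {0,1}^N with the product topology *)
Definition cantor_set {T : Type} (d : T -> T -> R) (C : T -> Prop) : Prop :=
  exists h : (nat -> bool) -> T,
    (forall p q, h p = h q -> p = q) /\
    (forall x, C x <-> exists p, h p = x) /\
    (forall p e, e > 0 -> exists N, forall q, agree_cantor N p q -> d (h p) (h q) < e) /\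
    (forall p N, exists e, e > 0 /\ forall q, d (h p) (h q) < e -> agree_cantor N p q).

Definition mycielski {T : Type} (d : T -> T -> R) (S : T -> Prop) : Prop :=
  exists Cs : nat -> T -> Prop,
    (forall n, cantor_set d (Cs n)) /\ (forall x, S x <-> exists n, Cs n x).

Definition dense_in {T : Type} (d : T -> T -> R) (X S : T -> Prop) : Prop :=
  (forall x, S x -> X x) /\
  (forall x, X x -> forall e, e > 0 -> exists y, S y /\ d x y < e).

Definition finite_type (A : Type) : Prop := exists l : list A, forall a : A, In a l.

Definition sync_word {A : Type} (lang : list A -> Prop) (s : list A) : Prop :=
  s <> [] /\ lang s /\
  forall u v, lang (u ++ s) -> lang (s ++ v) -> lang (u ++ s ++ v).

Definition shift1 {A : Type} (x : nat -> A) : nat -> A := fun i => x (S i).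

(* d(x,y) = 2^{-k}, k maximal with x_[0,k) = y_[0,k); d(x,x) = 0 *)
Definition dist1 {A : Type} (x y : nat -> A) : R :=
  epsilon (inhabits 0%R) (fun r =>
    ((forall i, x i = y i) /\ r = 0) \/
    (exists k : nat, (forall i, (i < k)%nat -> x i = y i) /\ x k <> y k /\ r = (/2) ^ k)).

Definition occurs1 {A : Type} (w : list A) (x : nat -> A) (i : nat) : Prop :=
  forall j a, nth_error w j = Some a -> x (i + j)%nat = a.

Definition lang1 {A : Type} (X : (nat -> A) -> Prop) (w : list A) : Prop :=
  exists x i, X x /\ occurs1 w x i.

Definition subshift1 {A : Type} (X : (nat -> A) -> Prop) : Prop :=
  closed_set dist1 X /\ (forall x, X x -> X (shift1 x)).

Definition synchronizing1 {A : Type} (X : (nat -> A) -> Prop) : Prop :=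
  subshift1 X /\ transitive dist1 shift1 X /\ exists s, sync_word (lang1 X) s.

Definition shift2 {A : Type} (x : Z -> A) : Z -> A := fun i => x (i + 1)%Z.

(* d(x,y) = 2^{-k}, k maximal with x_(-k,k) = y_(-k,k); d(x,x) = 0 *)
Definition dist2 {A : Type} (x y : Z -> A) : R :=
  epsilon (inhabits 0%R) (fun r =>
    ((forall i, x i = y i) /\ r = 0) \/
    (exists k : nat, (forall i, (Z.abs i < Z.of_nat k)%Z -> x i = y i) /\
       (x (Z.of_nat k) <> y (Z.of_nat k) \/ x (- Z.of_nat k)%Z <> y (- Z.of_nat k)%Z) /\
       r = (/2) ^ k)).

Definition occurs2 {A : Type} (w : list A) (x : Z -> A) (i : Z) : Prop :=
  forall j a, nth_error w j = Some a -> x (i + Z.of_nat j)%Z = a.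

Definition lang2 {A : Type} (X : (Z -> A) -> Prop) (w : list A) : Prop :=
  exists x i, X x /\ occurs2 w x i.

(* closed and sigma(X) = X *)
Definition subshift2 {A : Type} (X : (Z -> A) -> Prop) : Prop :=
  closed_set dist2 X /\
  (forall x, X x -> X (shift2 x) /\ X (fun i => x (i - 1)%Z)).

Definition synchronizing2 {A : Type} (X : (Z -> A) -> Prop) : Prop :=
  subshift2 X /\ transitive dist2 shift2 X /\ exists s, sync_word (lang2 X) s.

From Stdlib Require Import Reals List ZArith.
From Stdlib Require Import Lia Lra Bool Classical ClassicalEpsilon Cantor FunctionalExtensionality.
Import ListNotations.
Open Scope R_scope.

(* Let L be the language of X and s a synchronizing word.  Mixing of X makes L
   mixing (legal words can be joined across any large gap), which yields legal
   "sync tiles" of a common length k, each starting with s and legally followed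
   by s: a filler tile F, and marker tiles Z1, Z2 carrying windows of z and z'
   at a common offset.  As s synchronizes, every concatenation of sync tiles is
   legal.  A coded point consists of filler tiles on the left, a block around
   the origin (any legal word, for density), and a tail in which sparse slots,
   at tile positions 8q^2+8, show Z1 or Z2 according to a label b : nat -> bool
   (bit slots) or to compare the point with its own translates (pair slots),
   with F everywhere else.  S consists of the coded points with labels 1^c 0 p
   (block c, Cantor parameter p), read from every tile boundary.  The long
   filler stretches between slots give syndetic proximality; slots showing Z1
   against Z2 give non-asymptoticity and the visits near (z, z'); p |-> point is
   a homeomorphism onto its image, which gives the Mycielski property. *)

Lemma half_pow_pos (n : nat) : 0 < (/2)^n.
Proof. apply pow_lt; lra. Qed.

Lemma half_pow_le (m n : nat) : (m <= n)%nat -> (/2)^n <= (/2)^m.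
Proof.
  intro H. induction H; [lra|].
  simpl. pose proof (half_pow_pos m0). lra.
Qed.

Lemma half_pow_small (e : R) : e > 0 -> exists m, (/2)^m < e.
Proof.
  intro He. destruct (pow_lt_1_zero (/2)) with (y := e) as [N HN];
    [rewrite Rabs_right; lra | lra |].
  exists N. specialize (HN N (le_n N)). rewrite Rabs_right in HN; auto.
  left. apply half_pow_pos.
Qed.

Lemma least_witness (Q : nat -> Prop) :
  (exists i, Q i) -> exists i, Q i /\ forall j, (j < i)%nat -> ~ Q j.
Proof.
  intros [i Hi]. revert Hi. pattern i. apply (well_founded_ind lt_wf). clear i.
  intros i IH Hi. destruct (classic (exists j, (j < i)%nat /\ Q j)) as [[j [Hj1 Hj2]]|Hn].
  - exact (IH j Hj1 Hj2).
  - exists i. split; auto. intros j Hj HQ. apply Hn. eauto.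
Qed.

Definition window {A : Type} (g : Z -> A) (a : Z) (len : nat) : list A :=
  map (fun i => g (a + Z.of_nat i)%Z) (seq 0 len).

Lemma window_nth {A : Type} (g : Z -> A) a len j :
  nth_error (window g a len) j = if (j <? len)%nat then Some (g (a + Z.of_nat j)%Z) else None.
Proof.
  unfold window. rewrite nth_error_map. destruct (Nat.ltb_spec j len).
  - rewrite nth_error_seq. destruct (Nat.ltb_spec j len); try lia. reflexivity.
  - rewrite (proj2 (nth_error_None (seq 0 len) j)); auto. rewrite length_seq. lia.
Qed.

Lemma window_length {A : Type} (g : Z -> A) a len : length (window g a len) = len.
Proof. unfold window. rewrite length_map, length_seq. auto. Qed.

Lemma window_app {A : Type} (g : Z -> A) a l1 l2 :
  window g a (l1 + l2) = window g a l1 ++ window g (a + Z.of_nat l1) l2.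
Proof.
  apply nth_error_ext. intro j. rewrite window_nth.
  destruct (Nat.lt_ge_cases j l1).
  - rewrite nth_error_app1 by (rewrite window_length; auto). rewrite window_nth.
    destruct (Nat.ltb_spec j (l1 + l2)); destruct (Nat.ltb_spec j l1); try lia. auto.
  - rewrite nth_error_app2 by (rewrite window_length; auto). rewrite window_nth, window_length.
    destruct (Nat.ltb_spec j (l1 + l2)); destruct (Nat.ltb_spec (j - l1) l2); try lia; auto.
    do 2 f_equal. lia.
Qed.

(** * Words and languages *)

Definition occurs_at {A : Type} (w W : list A) (o : nat) : Prop :=
  forall j a, nth_error w j = Some a -> nth_error W (o + j) = Some a.

Lemma nth_error_firstn_lt {A : Type} (l : list A) n i :
  (i < n)%nat -> nth_error (firstn n l) i = nth_error l i.
Proof. intro H. rewrite nth_error_firstn. destruct (Nat.ltb_spec i n); auto; lia. Qed.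

Lemma occurs_at_prefix {A : Type} (u T : list A) :
  occurs_at u T 0 -> T = u ++ skipn (length u) T.
Proof.
  intro H. rewrite <- (firstn_skipn (length u) T) at 1. f_equal.
  apply nth_error_ext. intro j. destruct (Nat.lt_ge_cases j (length u)).
  - rewrite nth_error_firstn_lt by auto. destruct (nth_error u j) eqn:E.
    + apply H in E. auto.
    + apply nth_error_None in E. lia.
  - rewrite (proj2 (nth_error_None u j)) by lia. apply nth_error_None. rewrite length_firstn. lia.
Qed.

Definition factor_closed {A : Type} (L : list A -> Prop) : Prop :=
  forall u w v, L (u ++ w ++ v) -> L w.

Definition mixing_language {A : Type} (L : list A -> Prop) : Prop :=
  forall u v, L u -> L v -> exists N, forall n, (N <= n)%nat -> (length u <= n)%nat ->
    exists W, L W /\ occurs_at u W 0 /\ occurs_at v W n /\ length W = (n + length v)%nat.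

Lemma window_sub {A : Type} (L : list A -> Prop) (g : Z -> A) a len a' len' :
  factor_closed L -> L (window g a len) -> (a <= a')%Z ->
  (a' + Z.of_nat len' <= a + Z.of_nat len)%Z -> L (window g a' len').
Proof.
  intros Hf H Ha Hl.
  replace len with (Z.to_nat (a' - a) + (len' + (len - Z.to_nat (a' - a) - len')))%nat in H by lia.
  rewrite !window_app in H. replace (a + Z.of_nat (Z.to_nat (a' - a)))%Z with a' in H by lia.
  exact (Hf _ _ _ H).
Qed.

Lemma bridge {A : Type} (L : list A -> Prop) (s u w : list A) :
  factor_closed L -> mixing_language L -> L s -> L u -> L w ->
  exists No, forall o, (No <= o)%nat -> exists Nk, forall k, (Nk <= k)%nat ->
    exists T, length T = k /\ occurs_at u T 0 /\ occurs_at w T o /\ L (T ++ s).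
Proof.
  intros Hf Hm Hs Hu Hw.
  destruct (Hm u w Hu Hw) as [N1 HN1].
  exists (N1 + length u)%nat. intros o Ho.
  destruct (HN1 o ltac:(lia) ltac:(lia)) as [V [HV [HV1 [HV2 HV3]]]].
  destruct (Hm V s HV Hs) as [N2 HN2].
  exists (N2 + length V)%nat. intros k Hk.
  destruct (HN2 k ltac:(lia) ltac:(lia)) as [W [HW [HW1 [HW2 HW3]]]].
  exists (firstn k W). split; [|split; [|split]].
  - rewrite length_firstn. lia.
  - intros j a Hj. rewrite nth_error_firstn_lt.
    + apply HW1. simpl. apply HV1. auto.
    + assert (j < length u)%nat by (apply nth_error_Some; congruence). lia.
  - intros j a Hj. assert (j < length w)%nat by (apply nth_error_Some; congruence).
    rewrite nth_error_firstn_lt by lia. apply HW1. apply HV2. auto.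
  - replace W with (firstn k W ++ s) in HW; auto.
    rewrite <- (firstn_skipn k W) at 2. f_equal.
    apply nth_error_ext. intros i.
    destruct (Nat.lt_ge_cases i (length s)).
    + rewrite nth_error_skipn.
      destruct (nth_error s i) eqn:E.
      * apply HW2 in E. rewrite E. auto.
      * apply nth_error_None in E. lia.
    + rewrite (proj2 (nth_error_None s i)) by lia.
      symmetry. apply nth_error_None. rewrite length_skipn. lia.
Qed.

Definition sync_tile {A : Type} (L : list A -> Prop) (s t : list A) : Prop :=
  exists v, t = s ++ v /\ L (t ++ s).

Lemma sync_tile_intro {A : Type} (L : list A -> Prop) (s T : list A) :
  occurs_at s T 0 -> L (T ++ s) -> sync_tile L s T.
Proof. intros H1 H2. exists (skipn (length s) T). split; auto. apply occurs_at_prefix; auto. Qed.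

Lemma sync_glue {A : Type} (L : list A -> Prop) s u t :
  sync_word L s -> L (u ++ s) -> sync_tile L s t -> L (u ++ t ++ s).
Proof.
  intros [_ [_ Hs]] Hu [v [-> Hv]]. rewrite <- !app_assoc.
  apply Hs; auto. rewrite <- app_assoc in Hv. auto.
Qed.

Lemma window_glue {A : Type} (L : list A -> Prop) s g a len l2 :
  sync_word L s -> L (window g a len ++ s) -> sync_tile L s (window g (a + Z.of_nat len) l2) ->
  L (window g a (len + l2) ++ s).
Proof. intros Hs H1 H2. rewrite window_app, <- app_assoc. apply sync_glue; auto. Qed.

Fixpoint words_of_length {A : Type} (l : list A) (n : nat) : list (list A) :=
  match n with
  | O => [[]]
  | S n => flat_map (fun w => map (fun a => a :: w) l) (words_of_length l n)
  end.

Lemma words_of_length_complete {A : Type} (l : list A) :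
  (forall a, In a l) -> forall w, In w (words_of_length l (length w)).
Proof.
  intros Hl w. induction w; simpl; auto. apply in_flat_map. exists w. split; auto.
  apply in_map_iff. exists a. auto.
Qed.

Definition word_of_code {A : Type} (l : list A) (c : nat) : list A :=
  nth (snd (of_nat c)) (words_of_length l (fst (of_nat c))) [].

Lemma word_of_code_surj {A : Type} (l : list A) :
  (forall a, In a l) -> forall w, exists c, word_of_code l c = w.
Proof.
  intros Hl w. destruct (In_nth _ _ [] (words_of_length_complete l Hl w)) as [r [_ Hr]].
  exists (to_nat (length w, r)). unfold word_of_code. rewrite cancel_of_to. auto.
Qed.

(** * The schedule of marked slots *)

(* A slot either compares the point with a copy of itself shifted by [e] tiles
   ([PairMark e]: tile Z1 at the slot, tile Z2 [e] tiles later), or reads bit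
   [i] of the label ([BitMark i flip]: tile Z2 iff the bit differs from [flip]). *)
Inductive mark := PairMark (e : Z) | BitMark (i : nat) (flip : bool).

Definition mark_code (a : nat) : mark :=
  if Nat.even a then BitMark (Nat.div2 (Nat.div2 a)) (Nat.odd (Nat.div2 a))
  else let b := Nat.div2 a in
       PairMark (if Nat.even b then (Z.of_nat (Nat.div2 b) + 1)%Z
                 else (- (Z.of_nat (Nat.div2 b) + 1))%Z).

Lemma mark_code_bit i flip : exists a, mark_code a = BitMark i flip.
Proof.
  exists (2 * (2 * i + Nat.b2n flip))%nat. unfold mark_code.
  rewrite Nat.even_even, Nat.div2_double.
  destruct flip; simpl Nat.b2n.
  - rewrite Nat.div2_odd', Nat.odd_odd. reflexivity.
  - rewrite Nat.add_0_r, Nat.div2_double, Nat.odd_even. reflexivity.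
Qed.

Lemma mark_code_pair e : e <> 0%Z -> exists a, mark_code a = PairMark e.
Proof.
  intro He. destruct (Z_le_gt_dec 0 e).
  - exists (2 * (2 * (Z.to_nat e - 1)) + 1)%nat. unfold mark_code.
    rewrite Nat.even_odd, Nat.div2_odd', Nat.even_even, Nat.div2_double. f_equal. lia.
  - exists (2 * (2 * (Z.to_nat (- e) - 1) + 1) + 1)%nat. unfold mark_code.
    rewrite Nat.even_odd, Nat.div2_odd', Nat.even_odd, Nat.div2_odd'. f_equal. lia.
Qed.

Lemma mark_code_bit_le a i flip : mark_code a = BitMark i flip -> (i <= a)%nat.
Proof.
  unfold mark_code. destruct (Nat.even a); intro H; inversion H.
  pose proof (Nat.le_div2_diag_l a). pose proof (Nat.le_div2_diag_l (Nat.div2 a)). lia.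
Qed.

Lemma mark_code_pair_bound a e :
  mark_code a = PairMark e -> e <> 0%Z /\ (Z.abs e <= Z.of_nat a + 1)%Z.
Proof.
  unfold mark_code. pose proof (Nat.le_div2_diag_l a). pose proof (Nat.le_div2_diag_l (Nat.div2 a)).
  destruct (Nat.even a); intro HH; try discriminate.
  set (b := Nat.div2 a) in *. set (d := Nat.div2 b) in *. clearbody d.
  destruct (Nat.even b); inversion HH; clearbody b; subst; clear HH; lia.
Qed.

(* Slot [q] carries the mark coded by the first Cantor coordinate of [q], so
   every mark is carried by infinitely many slots. *)
Definition slot_mark (q : nat) : mark := mark_code (fst (of_nat q)).

Lemma fst_of_nat_le q : (fst (of_nat q) <= q)%nat.
Proof.
  rewrite <- (cancel_to_of q) at 2. destruct (of_nat q) as [a b]. cbn [fst].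
  pose proof (to_nat_non_decreasing a b). lia.
Qed.

Lemma slot_mark_infinite (c : mark) : (forall e, c = PairMark e -> e <> 0%Z) ->
  forall N, exists q, (N <= q)%nat /\ slot_mark q = c.
Proof.
  intros Hc N. assert (exists a, mark_code a = c) as [a Ha].
  { destruct c. apply mark_code_pair. apply Hc; auto. apply mark_code_bit. }
  exists (to_nat (a, N)). unfold slot_mark. rewrite cancel_of_to.
  pose proof (to_nat_non_decreasing a N). split; [lia | auto].
Qed.

Lemma slot_mark_bit q i flip : slot_mark q = BitMark i flip -> (i <= q)%nat.
Proof. intro H. apply mark_code_bit_le in H. pose proof (fst_of_nat_le q). lia. Qed.

Lemma slot_mark_pair q e :
  slot_mark q = PairMark e -> e <> 0%Z /\ (Z.abs e <= Z.of_nat q + 1)%Z.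
Proof. intro H. apply mark_code_pair_bound in H. pose proof (fst_of_nat_le q). lia. Qed.

(* Slots sit at quadratically spaced tile positions, so that consecutive slots
   are separated by gaps growing linearly. *)
Definition slot_pos (q : nat) : Z := (8 * Z.of_nat q * Z.of_nat q + 8)%Z.

Lemma slot_pos_ge q : (Z.of_nat q + 8 <= slot_pos q)%Z.
Proof. unfold slot_pos. nia. Qed.

Lemma slot_pos_mono q1 q2 : (q1 < q2)%nat -> (slot_pos q1 + Z.of_nat q1 < slot_pos q2 + Z.of_nat q2)%Z.
Proof. intro H. unfold slot_pos. assert (Z.of_nat q1 + 1 <= Z.of_nat q2)%Z by lia. nia. Qed.

Definition slot_cell (q : nat) (i : Z) : Prop :=
  i = slot_pos q \/ exists e, slot_mark q = PairMark e /\ i = (slot_pos q + e)%Z.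

Lemma slot_cell_near q i : slot_cell q i -> (Z.abs (i - slot_pos q) <= Z.of_nat q + 1)%Z.
Proof. intros [->|[e [He ->]]]. lia. apply slot_mark_pair in He. lia. Qed.

Lemma slot_cell_sep q1 q2 i1 i2 : (q1 < q2)%nat -> slot_cell q1 i1 -> slot_cell q2 i2 ->
  (i2 - i1 >= 14 * Z.of_nat q1 + 5)%Z.
Proof.
  intros Hq H1 H2. apply slot_cell_near in H1. apply slot_cell_near in H2. unfold slot_pos in *.
  assert (Z.of_nat q1 + 1 <= Z.of_nat q2)%Z by lia.
  set (a := Z.of_nat q1) in *. set (b := Z.of_nat q2) in *.
  assert (0 <= a)%Z by lia.
  assert (8 * b * b - b >= 8 * (a+1) * (a+1) - (a + 1))%Z by nia.
  lia.
Qed.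

Lemma slot_cell_unique q1 q2 i : slot_cell q1 i -> slot_cell q2 i -> q1 = q2.
Proof.
  intros H1 H2. destruct (Nat.lt_total q1 q2) as [H|[H|H]]; auto.
  - pose proof (slot_cell_sep _ _ _ _ H H1 H2). lia.
  - pose proof (slot_cell_sep _ _ _ _ H H2 H1). lia.
Qed.

Definition slot_at (i : Z) : option nat :=
  match excluded_middle_informative (exists q, i = slot_pos q) with
  | left H => Some (proj1_sig (constructive_indefinite_description _ H))
  | right _ => None
  end.

Definition is_partner (i : Z) : bool :=
  match excluded_middle_informative
          (exists q e, slot_mark q = PairMark e /\ i = (slot_pos q + e)%Z) with
  | left _ => true | right _ => false end.

Lemma slot_at_pos q : slot_at (slot_pos q) = Some q.
Proof.
  unfold slot_at. destruct (excluded_middle_informative _) as [H|H].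
  - destruct (constructive_indefinite_description _ H) as [q' Hq']. simpl. f_equal.
    apply (slot_cell_unique q' q (slot_pos q)); left; auto.
  - exfalso. eauto.
Qed.

Lemma slot_at_Some i q : slot_at i = Some q -> i = slot_pos q.
Proof.
  unfold slot_at. destruct (excluded_middle_informative _) as [H|H]; try discriminate.
  destruct (constructive_indefinite_description _ H) as [q' Hq']. simpl. congruence.
Qed.

Definition slot_tile {A : Type} (Z1 Z2 : list A) (b : nat -> bool) (q : nat) : list A :=
  match slot_mark q with
  | PairMark _ => Z1
  | BitMark i flip => if xorb (b i) flip then Z2 else Z1
  end.

Definition tail_tile {A : Type} (F Z1 Z2 : list A) (b : nat -> bool) (i : Z) : list A :=
  match slot_at i with
  | Some q => slot_tile Z1 Z2 b q
  | None => if is_partner i then Z2 else F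
  end.

Lemma tail_tile_slot {A : Type} (F Z1 Z2 : list A) b q :
  tail_tile F Z1 Z2 b (slot_pos q) = slot_tile Z1 Z2 b q.
Proof. unfold tail_tile. rewrite slot_at_pos. auto. Qed.

Lemma tail_tile_partner {A : Type} (F Z1 Z2 : list A) b q e : slot_mark q = PairMark e ->
  tail_tile F Z1 Z2 b (slot_pos q + e) = Z2.
Proof.
  intro He. unfold tail_tile.
  destruct (slot_at (slot_pos q + e)) eqn:E.
  - exfalso. apply slot_at_Some in E. assert (slot_cell q (slot_pos q + e)) as H1 by (right; eauto).
    assert (slot_cell n (slot_pos q + e)) as H2 by (left; auto).
    pose proof (slot_cell_unique _ _ _ H1 H2). subst n.
    apply slot_mark_pair in He. lia.
  - unfold is_partner. destruct (excluded_middle_informative _) as [H|H]; auto.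
    exfalso. apply H. eauto.
Qed.

Lemma tail_tile_free {A : Type} (F Z1 Z2 : list A) b i :
  (forall q, ~ slot_cell q i) -> tail_tile F Z1 Z2 b i = F.
Proof.
  intro H. unfold tail_tile. destruct (slot_at i) eqn:E.
  - exfalso. apply slot_at_Some in E. apply (H n). left; auto.
  - unfold is_partner. destruct (excluded_middle_informative _) as [[q [e [H1 H2]]]|H']; auto.
    exfalso. apply (H q). right. eauto.
Qed.

Lemma tail_tile_local {A : Type} (F Z1 Z2 : list A) b b' i :
  (forall n, (Z.of_nat n <= i)%Z -> b n = b' n) ->
  tail_tile F Z1 Z2 b i = tail_tile F Z1 Z2 b' i.
Proof.
  intros H. unfold tail_tile. destruct (slot_at i) eqn:E; auto.
  apply slot_at_Some in E. unfold slot_tile. destruct (slot_mark n) eqn:K; auto.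
  apply slot_mark_bit in K. rewrite H; auto. unfold slot_pos in E. nia.
Qed.

(** * Coded points *)

(* Tile data: tile length [tk], filler tile [tF], marker tiles [tZ1], [tZ2],
   and a default letter. *)
Record tiles (A : Type) := Tiles { tk : nat; tF : list A; tZ1 : list A; tZ2 : list A; tdef : A }.
(* A block of [bcount] tiles whose word is [bword], starting [bpre] tiles left
   of the origin. *)
Record block (A : Type) := Block { bpre : nat; bcount : nat; bword : list A }.
Arguments tk {A}. Arguments tF {A}. Arguments tZ1 {A}. Arguments tZ2 {A}. Arguments tdef {A}.
Arguments bpre {A}. Arguments bcount {A}. Arguments bword {A}.

Definition tiles_ok {A} (G : tiles A) : Prop :=
  (1 <= tk G)%nat /\ length (tF G) = tk G /\ length (tZ1 G) = tk G /\ length (tZ2 G) = tk G.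

Definition block_ok {A} (G : tiles A) (P : block A) : Prop :=
  length (bword P) = (bcount P * tk G)%nat.

Definition tiles_sync {A} (L : list A -> Prop) s (G : tiles A) : Prop :=
  sync_tile L s (tF G) /\ sync_tile L s (tZ1 G) /\ sync_tile L s (tZ2 G).

Definition markers_differ {A} (G : tiles A) : Prop :=
  exists r0, (r0 < tk G)%nat /\ nth r0 (tZ1 G) (tdef G) <> nth r0 (tZ2 G) (tdef G).

Definition tail_start {A} (P : block A) : Z := (Z.of_nat (bcount P) - Z.of_nat (bpre P))%Z.

Definition tail_of {A} (G : tiles A) (b : nat -> bool) (t : Z) : list A :=
  tail_tile (tF G) (tZ1 G) (tZ2 G) b t.

Definition coded_point {A} (G : tiles A) (P : block A) (b : nat -> bool) (i : Z) : A :=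
  let kz := Z.of_nat (tk G) in
  let t := (i / kz)%Z in let r := Z.to_nat (i mod kz) in
  if (t <? - Z.of_nat (bpre P))%Z then nth r (tF G) (tdef G)
  else if (t <? tail_start P)%Z
       then nth (Z.to_nat (i + Z.of_nat (bpre P) * kz)) (bword P) (tdef G)
  else nth r (tail_of G b t) (tdef G).

Lemma divmod_tile (k : Z) t r : (0 <= r < k)%Z -> ((t * k + r) / k = t /\ (t * k + r) mod k = r)%Z.
Proof.
  intro H. split.
  - rewrite Z.add_comm, Z.div_add by lia. rewrite Z.div_small by lia. lia.
  - rewrite Z.add_comm, Z.mod_add by lia. apply Z.mod_small. lia.
Qed.

Lemma tail_of_length {A} (G : tiles A) b t : tiles_ok G -> length (tail_of G b t) = tk G.
Proof.
  intros [_ [H1 [H2 H3]]]. unfold tail_of, tail_tile, slot_tile.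
  destruct (slot_at t); [destruct (slot_mark n); [|destruct (xorb _ _)]|destruct (is_partner t)]; auto.
Qed.

Lemma tail_of_sync {A} L s (G : tiles A) b t : tiles_sync L s G -> sync_tile L s (tail_of G b t).
Proof.
  intros [H1 [H2 H3]]. unfold tail_of, tail_tile, slot_tile.
  destruct (slot_at t); [destruct (slot_mark n); [|destruct (xorb _ _)]|destruct (is_partner t)]; auto.
Qed.

Lemma coded_point_tail {A} (G : tiles A) P b t r :
  (tail_start P <= t)%Z -> (0 <= r < Z.of_nat (tk G))%Z ->
  coded_point G P b (t * Z.of_nat (tk G) + r) = nth (Z.to_nat r) (tail_of G b t) (tdef G).
Proof.
  intros Ht Hr. unfold coded_point, tail_start in *.
  destruct (divmod_tile (Z.of_nat (tk G)) t r Hr) as [E1 E2].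
  rewrite E1, E2. destruct (Z.ltb_spec t (- Z.of_nat (bpre P))); try lia.
  destruct (Z.ltb_spec t (Z.of_nat (bcount P) - Z.of_nat (bpre P))); try lia. auto.
Qed.

Lemma coded_point_left {A} (G : tiles A) P b t r :
  (t < - Z.of_nat (bpre P))%Z -> (0 <= r < Z.of_nat (tk G))%Z ->
  coded_point G P b (t * Z.of_nat (tk G) + r) = nth (Z.to_nat r) (tF G) (tdef G).
Proof.
  intros Ht Hr. unfold coded_point. destruct (divmod_tile (Z.of_nat (tk G)) t r Hr) as [E1 E2].
  rewrite E1, E2. destruct (Z.ltb_spec t (- Z.of_nat (bpre P))); try lia. auto.
Qed.

Lemma coded_point_block {A} (G : tiles A) P b p : tiles_ok G ->
  (0 <= p < Z.of_nat (bcount P * tk G))%Z ->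
  coded_point G P b (p - Z.of_nat (bpre P) * Z.of_nat (tk G)) = nth (Z.to_nat p) (bword P) (tdef G).
Proof.
  intros HG Hp. unfold coded_point, tail_start. set (k := Z.of_nat (tk G)).
  assert (1 <= k)%Z by (unfold k; destruct HG; lia).
  assert ((p - Z.of_nat (bpre P) * k) / k = p / k - Z.of_nat (bpre P))%Z as E.
  { replace (p - Z.of_nat (bpre P) * k)%Z with (p + (- Z.of_nat (bpre P)) * k)%Z by lia.
    rewrite Z.div_add by lia. lia. }
  rewrite E. assert (0 <= p / k)%Z by (apply Z.div_pos; lia).
  assert (p / k < Z.of_nat (bcount P))%Z.
  { apply Z.div_lt_upper_bound. lia. rewrite Nat2Z.inj_mul in Hp. fold k in Hp. lia. }
  destruct (Z.ltb_spec (p / k - Z.of_nat (bpre P)) (- Z.of_nat (bpre P))); try lia.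
  destruct (Z.ltb_spec (p / k - Z.of_nat (bpre P)) (Z.of_nat (bcount P) - Z.of_nat (bpre P))); try lia.
  f_equal. lia.
Qed.

Lemma coded_point_local {A} (G : tiles A) P b1 b2 i :
  (forall n, (Z.of_nat n <= i / Z.of_nat (tk G))%Z -> b1 n = b2 n) ->
  coded_point G P b1 i = coded_point G P b2 i.
Proof.
  intro H. unfold coded_point. destruct (_ <? _)%Z; auto. destruct (_ <? _)%Z; auto.
  unfold tail_of. rewrite (tail_tile_local _ _ _ b1 b2); auto.
Qed.

Lemma window_tail_tile {A} (G : tiles A) P b t : tiles_ok G -> (tail_start P <= t)%Z ->
  window (coded_point G P b) (t * Z.of_nat (tk G)) (tk G) = tail_of G b t.
Proof.
  intros HG Ht. apply nth_error_ext. intro j. rewrite window_nth.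
  destruct (Nat.ltb_spec j (tk G)).
  - rewrite coded_point_tail; try lia. rewrite Nat2Z.id. symmetry.
    apply nth_error_nth'. rewrite tail_of_length; auto.
  - symmetry. apply nth_error_None. rewrite tail_of_length; auto.
Qed.

Lemma window_left_tile {A} (G : tiles A) P b t : tiles_ok G -> (t < - Z.of_nat (bpre P))%Z ->
  window (coded_point G P b) (t * Z.of_nat (tk G)) (tk G) = tF G.
Proof.
  intros HG Ht. pose proof HG as [_ [HF _]]. apply nth_error_ext. intro j. rewrite window_nth.
  destruct (Nat.ltb_spec j (tk G)).
  - rewrite coded_point_left; try lia. rewrite Nat2Z.id. symmetry. apply nth_error_nth'. lia.
  - symmetry. apply nth_error_None. lia.
Qed.

Lemma window_block {A} (G : tiles A) P b : tiles_ok G -> block_ok G P ->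
  window (coded_point G P b) (- Z.of_nat (bpre P) * Z.of_nat (tk G)) (bcount P * tk G) = bword P.
Proof.
  intros HG HP. unfold block_ok in HP. apply nth_error_ext. intro j. rewrite window_nth.
  destruct (Nat.ltb_spec j (bcount P * tk G)).
  - replace (- Z.of_nat (bpre P) * Z.of_nat (tk G) + Z.of_nat j)%Z with
      (Z.of_nat j - Z.of_nat (bpre P) * Z.of_nat (tk G))%Z by lia.
    rewrite coded_point_block; auto; try lia. rewrite Nat2Z.id. symmetry.
    apply nth_error_nth'. lia.
  - symmetry. apply nth_error_None. lia.
Qed.

(** Legality: every tile is a sync tile, so gluing them one at a time keeps
    every finite window of a coded point legal. *)

Section Legality.
Context {A : Type} (L : list A -> Prop) (s : list A) (G : tiles A) (P : block A) (b : nat -> bool).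
Hypotheses (Hs : sync_word L s) (HG : tiles_ok G) (HT : tiles_sync L s G).
Let g := coded_point G P b.
Let kz := Z.of_nat (tk G).

Lemma left_windows_legal R :
  L (window g (- Z.of_nat (bpre P + R + 1) * kz) ((R + 1) * tk G) ++ s).
Proof.
  pose proof HT as [[_ [_ HF]] _].
  assert (forall j, (j <= R)%nat ->
    L (window g (- Z.of_nat (bpre P + R + 1) * kz) ((j + 1) * tk G) ++ s)) as H.
  { induction j; intro Hj.
    - simpl. rewrite Nat.add_0_r. unfold g, kz. rewrite window_left_tile; auto. lia.
    - replace ((S j + 1) * tk G)%nat with ((j + 1) * tk G + tk G)%nat by lia.
      apply window_glue; auto. apply IHj; lia.
      replace (- Z.of_nat (bpre P + R + 1) * kz + Z.of_nat ((j + 1) * tk G))%Z with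
        ((- Z.of_nat (bpre P + R + 1) + Z.of_nat (j + 1)) * kz)%Z by (unfold kz; lia).
      unfold g, kz. rewrite window_left_tile; auto; try lia. apply HT. }
  apply H. lia.
Qed.

Lemma tail_windows_legal a len :
  (a + Z.of_nat len = tail_start P * kz)%Z -> L (window g a len ++ s) ->
  forall n, L (window g a (len + n * tk G) ++ s).
Proof.
  intros Ha H0 n. induction n.
  - rewrite Nat.add_0_r. auto.
  - replace (len + S n * tk G)%nat with ((len + n * tk G) + tk G)%nat by lia.
    apply window_glue; auto.
    replace (a + Z.of_nat (len + n * tk G))%Z with ((tail_start P + Z.of_nat n) * kz)%Z
      by (unfold kz; lia).
    unfold g, kz. rewrite window_tail_tile; auto; try lia. apply tail_of_sync; auto.
Qed.

Lemma coded_point_legal : block_ok G P -> sync_tile L s (bword P) -> factor_closed L ->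
  forall m : nat, L (window g (- Z.of_nat m) (2 * m)).
Proof.
  intros HP HB Hf m. pose proof HG as [Hk _].
  set (a := (- Z.of_nat (bpre P + m + 1) * kz)%Z).
  assert (Hmid : L (window g a ((m + 1) * tk G + bcount P * tk G) ++ s)).
  { apply window_glue; auto. apply left_windows_legal.
    replace (a + Z.of_nat ((m + 1) * tk G))%Z with (- Z.of_nat (bpre P) * kz)%Z by (unfold a; lia).
    unfold g, kz. rewrite window_block; auto. }
  pose proof (tail_windows_legal a ((m + 1) * tk G + bcount P * tk G) ltac:(unfold a, tail_start, kz; clear; nia) Hmid (m + bpre P)) as H.
  apply (Hf []) in H. apply (window_sub L g _ _ _ _ Hf H); unfold a, kz; clear - Hk; nia.
Qed.

End Legality.

Lemma marker_tiles_apart {A} (G : tiles A) (P1 P2 : block A) b1 b2 (j1 j2 : nat) (N : Z) :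
  (j1 <> j2 \/ exists i, b1 i <> b2 i) ->
  exists t, (N <= t)%Z /\ tail_of G b1 (t + Z.of_nat j1) = tZ1 G /\
    tail_of G b2 (t + Z.of_nat j2) = tZ2 G /\
    (tail_start P1 <= t + Z.of_nat j1)%Z /\ (tail_start P2 <= t + Z.of_nat j2)%Z.
Proof.
  intros Hd.
  set (Nq := (Z.to_nat (Z.abs N + Z.abs (tail_start P1) + Z.abs (tail_start P2)) + j1 + j2 + 1)%nat).
  destruct (Nat.eq_dec j1 j2) as [Ej|Nj].
  - (* equal offsets: a slot reading a bit where the labels differ *)
    destruct Hd as [Hd|[i Hi]]; [contradiction|]. subst j2.
    destruct (slot_mark_infinite (BitMark i (b1 i)) ltac:(intros e He; discriminate) Nq)
      as [q [Hq Kq]].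
    exists (slot_pos q - Z.of_nat j1)%Z. pose proof (slot_pos_ge q).
    replace (slot_pos q - Z.of_nat j1 + Z.of_nat j1)%Z with (slot_pos q) by lia.
    unfold tail_of. rewrite !tail_tile_slot. unfold slot_tile. rewrite Kq, xorb_nilpotent.
    destruct (b1 i), (b2 i); try congruence; simpl;
      (split; [lia|split; [auto|split; [auto|split; lia]]]).
  - (* different offsets: a pair slot comparing shifts by [j2 - j1] *)
    set (e := (Z.of_nat j2 - Z.of_nat j1)%Z).
    destruct (slot_mark_infinite (PairMark e) ltac:(intros e' He'; inversion He'; unfold e; lia) Nq)
      as [q [Hq Kq]].
    exists (slot_pos q - Z.of_nat j1)%Z. pose proof (slot_pos_ge q).
    pose proof (slot_mark_pair _ _ Kq) as [_ Hb].
    replace (slot_pos q - Z.of_nat j1 + Z.of_nat j1)%Z with (slot_pos q) by lia.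
    replace (slot_pos q - Z.of_nat j1 + Z.of_nat j2)%Z with (slot_pos q + e)%Z by (unfold e; lia).
    unfold tail_of. rewrite tail_tile_slot, (tail_tile_partner _ _ _ _ _ _ Kq).
    unfold slot_tile. rewrite Kq.
    unfold e in *. split; [lia|split; [auto|split; [auto|split; lia]]].
Qed.

Lemma bit_readable {A} (G : tiles A) (P : block A) (j n : nat) : markers_differ G ->
  exists t : nat, forall b1 b2,
    (forall r, (0 <= r < Z.of_nat (tk G))%Z ->
       coded_point G P b1 ((Z.of_nat t + Z.of_nat j) * Z.of_nat (tk G) + r) =
       coded_point G P b2 ((Z.of_nat t + Z.of_nat j) * Z.of_nat (tk G) + r)) -> b1 n = b2 n.
Proof.
  intros [r0 [Hr0 Hd]].
  destruct (slot_mark_infinite (BitMark n false) ltac:(intros e He; discriminate)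
              (Z.to_nat (Z.abs (tail_start P)) + j)) as [q [Hq Kq]].
  pose proof (slot_pos_ge q).
  exists (Z.to_nat (slot_pos q - Z.of_nat j)). intros b1 b2 HH.
  specialize (HH (Z.of_nat r0) ltac:(lia)).
  replace (Z.of_nat (Z.to_nat (slot_pos q - Z.of_nat j)) + Z.of_nat j)%Z with (slot_pos q) in HH by lia.
  rewrite !coded_point_tail in HH; try lia. unfold tail_of in HH. rewrite !tail_tile_slot in HH.
  unfold slot_tile in HH. rewrite Kq, !xorb_false_r, Nat2Z.id in HH.
  destruct (b1 n), (b2 n); auto; exfalso; apply Hd; auto.
Qed.

Lemma three_candidates (a p1 p2 R : Z) : (0 <= R)%Z ->
  exists c, (a <= c <= a + 2 * (2 * R + 1))%Z /\ (Z.abs (c - p1) > R)%Z /\ (Z.abs (c - p2) > R)%Z.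
Proof.
  intro HR.
  assert ((Z.abs (a - p1) > R /\ Z.abs (a - p2) > R) \/
          (Z.abs (a + (2*R+1) - p1) > R /\ Z.abs (a + (2*R+1) - p2) > R) \/
          (Z.abs (a + 2*(2*R+1) - p1) > R /\ Z.abs (a + 2*(2*R+1) - p2) > R))%Z as H by lia.
  destruct H as [[? ?]|[[? ?]|[? ?]]]; eexists; (split; [|split; eauto]); lia.
Qed.

(* Past this bound, slots are so sparse that a stretch of length [6R + 3]
   meets the cells of at most one slot. *)
Definition free_bound (R : Z) : Z :=
  (R + slot_pos (Z.to_nat (6 * R + 2)) + Z.of_nat (Z.to_nat (6 * R + 2)) + 1)%Z.

Lemma free_stretch (R a : Z) : (0 <= R)%Z -> (free_bound R <= a)%Z ->
  exists c, (a <= c <= a + 2 * (2 * R + 1))%Z /\ forall u q, (Z.abs (u - c) <= R)%Z -> ~ slot_cell q u.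
Proof.
  intros HR Ha.
  set (Dn := Z.to_nat (6 * R + 2)).
  assert (Hbig : forall q u, slot_cell q u -> (a - R <= u)%Z -> (Dn <= q)%nat).
  { intros q u Hf Hu. apply slot_cell_near in Hf. destruct (Nat.lt_ge_cases q Dn) as [Hl|]; auto.
    pose proof (slot_pos_mono _ _ Hl). unfold free_bound in Ha. fold Dn in Ha. lia. }
  destruct (classic (exists q u, slot_cell q u /\ (a - R <= u <= a + 2 * (2 * R + 1) + R)%Z))
    as [[q0 [u0 [H0 Hu0]]]|Hno].
  - assert (Huniq : forall q u, slot_cell q u -> (a - R <= u <= a + 2 * (2 * R + 1) + R)%Z -> q = q0).
    { intros q u Hf Hu. destruct (Nat.lt_total q q0) as [Hl|[He|Hl]]; auto; exfalso.
      - pose proof (slot_cell_sep _ _ _ _ Hl Hf H0). pose proof (Hbig q u Hf ltac:(lia)). lia.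
      - pose proof (slot_cell_sep _ _ _ _ Hl H0 Hf). pose proof (Hbig q0 u0 H0 ltac:(lia)). lia. }
    destruct (slot_mark q0) as [e|i flip] eqn:K.
    + destruct (three_candidates a (slot_pos q0) (slot_pos q0 + e) R HR) as [c [Hc1 [Hc2 Hc3]]].
      exists c. split; auto. intros u q Hu Hf.
      pose proof (Huniq q u Hf ltac:(lia)). subst q.
      destruct Hf as [->|[e' [K' ->]]]. lia. rewrite K in K'. inversion K'. subst. lia.
    + destruct (three_candidates a (slot_pos q0) (slot_pos q0) R HR) as [c [Hc1 [Hc2 Hc3]]].
      exists c. split; auto. intros u q Hu Hf.
      pose proof (Huniq q u Hf ltac:(lia)). subst q.
      destruct Hf as [->|[e' [K' ->]]]. lia. rewrite K in K'. discriminate.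
  - exists a. split. lia. intros u q Hu Hf. apply Hno. exists q, u. split; auto. lia.
Qed.

(* Syndetic proximality: in every thick set there is a time [n] around which two
   coded points (read from tiles [j1] and [j2]) agree on a window of radius [W],
   because both show only filler tiles there. *)
Lemma coded_points_meet {A} (G : tiles A) (P1 P2 : block A) b1 b2 (j1 j2 W : nat) (B : nat -> Prop) :
  tiles_ok G -> thick B ->
  exists n, B n /\ forall i : Z, (Z.abs i <= Z.of_nat W)%Z ->
    coded_point G P1 b1 (Z.of_nat n + i + Z.of_nat j1 * Z.of_nat (tk G)) =
    coded_point G P2 b2 (Z.of_nat n + i + Z.of_nat j2 * Z.of_nat (tk G)).
Proof.
  intros HG HB. set (k := Z.of_nat (tk G)). assert (Hk : (1 <= k)%Z) by (unfold k; destruct HG; lia).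
  set (R := (Z.of_nat W + Z.of_nat j1 + Z.of_nat j2)%Z).
  set (A0 := (free_bound R + Z.abs (tail_start P1) + Z.abs (tail_start P2) + R)%Z).
  set (Len := Z.to_nat ((A0 + 2 * (2 * R + 1) + 2) * k)).
  destruct (HB Len) as [m0 Hm0].
  set (a := (A0 + Z.of_nat m0 / k + 1)%Z).
  assert (0 <= Z.of_nat m0 / k)%Z by (apply Z.div_pos; lia).
  assert (0 <= free_bound R)%Z by (unfold free_bound, slot_pos; lia).
  destruct (free_stretch R a ltac:(lia) ltac:(unfold a, A0; lia)) as [c [Hc Hfree]].
  assert (Z.of_nat m0 < (Z.of_nat m0 / k + 1) * k)%Z.
  { pose proof (Z.mod_pos_bound (Z.of_nat m0) k ltac:(lia)).
    pose proof (Z.div_mod (Z.of_nat m0) k ltac:(lia)). nia. }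
  assert (Z.of_nat m0 <= c * k)%Z by nia.
  assert (c * k < Z.of_nat m0 + Z.of_nat Len)%Z.
  { unfold Len. rewrite Z2Nat.id by nia. pose proof (Z.mul_div_le (Z.of_nat m0) k ltac:(lia)). nia. }
  exists (Z.to_nat (c * k)). split.
  - replace (Z.to_nat (c * k)) with (m0 + (Z.to_nat (c * k) - m0))%nat by lia. apply Hm0. lia.
  - intros i Hi. rewrite Z2Nat.id by nia.
    pose proof (Z.div_mod i k ltac:(lia)) as Ei. pose proof (Z.mod_pos_bound i k ltac:(lia)) as Hr.
    set (d := (i / k)%Z) in *. set (r := (i mod k)%Z) in *.
    assert (Z.abs d <= Z.of_nat W)%Z.
    { assert (k * d <= i)%Z by lia. assert (i < k * d + k)%Z by lia. nia. }
    replace (c * k + i + Z.of_nat j1 * k)%Z with ((c + d + Z.of_nat j1) * k + r)%Z by lia.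
    replace (c * k + i + Z.of_nat j2 * k)%Z with ((c + d + Z.of_nat j2) * k + r)%Z by lia.
    unfold k. rewrite !coded_point_tail; try (unfold k in *; lia).
    unfold tail_of. rewrite !tail_tile_free; auto; intros q; apply Hfree; lia.
Qed.

(* The label [1^c 0 p] records both the block index [c] and the Cantor
   parameter [p]. *)
Definition label (c : nat) (p : nat -> bool) (i : nat) : bool :=
  if (i <? c)%nat then true else if (i =? c)%nat then false else p (i - c - 1)%nat.

Lemma label_inj c1 c2 p1 p2 : (forall i, label c1 p1 i = label c2 p2 i) -> c1 = c2 /\ p1 = p2.
Proof.
  intro H. assert (c1 = c2).
  { destruct (Nat.lt_total c1 c2) as [Hl|[He|Hl]]; auto; exfalso.
    - specialize (H c1). unfold label in H. rewrite Nat.ltb_irrefl, Nat.eqb_refl in H.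
      destruct (Nat.ltb_spec c1 c2); try lia; discriminate.
    - specialize (H c2). unfold label in H. rewrite Nat.ltb_irrefl, Nat.eqb_refl in H.
      destruct (Nat.ltb_spec c2 c1); try lia; discriminate. }
  subst c2. split; auto. apply functional_extensionality. intro i.
  specialize (H (c1 + 1 + i)%nat). unfold label in H.
  destruct (Nat.ltb_spec (c1 + 1 + i) c1); try lia. destruct (Nat.eqb_spec (c1 + 1 + i) c1); try lia.
  replace (c1 + 1 + i - c1 - 1)%nat with i in H by lia. auto.
Qed.

Lemma label_param c p i : label c p (c + 1 + i) = p i.
Proof.
  unfold label. destruct (Nat.ltb_spec (c + 1 + i) c); try lia.
  destruct (Nat.eqb_spec (c + 1 + i) c); try lia.
  replace (c + 1 + i - c - 1)%nat with i by lia. auto.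
Qed.

Lemma label_agree c p q N : agree_cantor N p q ->
  forall n, (n < c + 1 + N)%nat -> label c p n = label c q n.
Proof.
  intros H n Hn. unfold label. destruct (Nat.ltb_spec n c); auto.
  destruct (n =? c)%nat eqn:E; auto. apply Nat.eqb_neq in E. apply H. lia.
Qed.

Lemma label_differ c1 c2 p1 p2 : (c1, p1) <> (c2, p2) -> exists i, label c1 p1 i <> label c2 p2 i.
Proof.
  intro H. apply NNPP. intro Hn. apply H.
  assert (forall i, label c1 p1 i = label c2 p2 i).
  { intro i. apply NNPP. intro Hi. apply Hn. eauto. }
  apply label_inj in H0 as [-> ->]. auto.
Qed.

Lemma marker_tiles_exist {A} (L : list A -> Prop) (s w1 w2 : list A) (a0 : A) :
  factor_closed L -> mixing_language L -> sync_word L s -> L w1 -> L w2 ->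
  (exists j a1 a2, nth_error w1 j = Some a1 /\ nth_error w2 j = Some a2 /\ a1 <> a2) ->
  exists G o, tiles_ok G /\ tiles_sync L s G /\ markers_differ G /\
    occurs_at w1 (tZ1 G) o /\ occurs_at w2 (tZ2 G) o.
Proof.
  intros Hf Hm Hs L1 L2 [j [a1 [a2 [E1 [E2 Hne]]]]]. pose proof Hs as [_ [HLs _]].
  destruct (bridge L s s w1 Hf Hm HLs HLs L1) as [No1 HNo1].
  destruct (bridge L s s w2 Hf Hm HLs HLs L2) as [No2 HNo2].
  destruct (bridge L s s s Hf Hm HLs HLs HLs) as [No3 HNo3].
  set (o := (No1 + No2 + No3)%nat).
  destruct (HNo1 o ltac:(lia)) as [Nk1 HNk1].
  destruct (HNo2 o ltac:(lia)) as [Nk2 HNk2].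
  destruct (HNo3 o ltac:(lia)) as [Nk3 HNk3].
  set (k := (Nk1 + Nk2 + Nk3 + 1)%nat).
  destruct (HNk1 k ltac:(lia)) as [T1 [HT1l [HT1s [HT1w HT1L]]]].
  destruct (HNk2 k ltac:(lia)) as [T2 [HT2l [HT2s [HT2w HT2L]]]].
  destruct (HNk3 k ltac:(lia)) as [T3 [HT3l [HT3s [_ HT3L]]]].
  exists (Tiles A k T3 T1 T2 a0), o. cbn. split; [|split; [|split]]; auto.
  - unfold tiles_ok. cbn. lia.
  - split; [|split]; apply sync_tile_intro; auto.
  - pose proof (HT1w j a1 E1) as F1. pose proof (HT2w j a2 E2) as F2.
    exists (o + j)%nat. cbn. split.
    + rewrite <- HT1l. apply nth_error_Some. congruence.
    + rewrite (nth_error_nth _ _ a0 F1), (nth_error_nth _ _ a0 F2). auto.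
Qed.

Lemma block_exists {A} (L : list A -> Prop) s (G : tiles A) u h :
  factor_closed L -> mixing_language L -> sync_word L s -> tiles_ok G -> L u ->
  exists P, block_ok G P /\ sync_tile L s (bword P) /\
    forall b j a, nth_error u j = Some a -> coded_point G P b (Z.of_nat j - Z.of_nat h) = a.
Proof.
  intros Hf Hm Hs HG Hu. pose proof Hs as [_ [HLs _]]. pose proof HG as [Hk _].
  set (k := tk G).
  destruct (bridge L s s u Hf Hm HLs HLs Hu) as [No HNo].
  destruct (HNo ((No + h) * k - h)%nat ltac:(nia)) as [Nk HNk].
  destruct (HNk ((Nk + 1) * k)%nat ltac:(nia)) as [T [HTl [HTs [HTu HTL]]]].
  exists (Block A (No + h) (Nk + 1) T). unfold block_ok. cbn.
  split; [auto|split; [apply sync_tile_intro; auto|]].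
  intros b j a Hj. pose proof (HTu j a Hj) as E.
  assert ((No + h) * k - h + j < length T)%nat by (apply nth_error_Some; congruence).
  pose proof (coded_point_block G (Block A (No + h) (Nk + 1) T) b
    (Z.of_nat ((No + h) * k - h + j)) HG ltac:(cbn; unfold k in *; lia)) as Em.
  cbn in Em. rewrite Nat2Z.id in Em. fold k in Em.
  replace (Z.of_nat j - Z.of_nat h)%Z with
    (Z.of_nat ((No + h) * k - h + j) - Z.of_nat (No + h) * Z.of_nat k)%Z by nia.
  rewrite Em. apply nth_error_nth. auto.
Qed.

Lemma dense_blocks {A} (l : list A) (L : list A -> Prop) s (G : tiles A) :
  (forall a, In a l) -> factor_closed L -> mixing_language L -> sync_word L s -> tiles_ok G ->
  exists Pc : nat -> block A,
    (forall c, block_ok G (Pc c) /\ sync_tile L s (bword (Pc c))) /\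
    (forall u h, L u -> exists c, forall b j a, nth_error u j = Some a ->
       coded_point G (Pc c) b (Z.of_nat j - Z.of_nat h) = a).
Proof.
  intros Hl Hf Hm Hs HG. pose proof Hs as [_ [HLs _]].
  (* block [c] places the word coded by the first coordinate of [c] (or [s], if
     that word is illegal) at the shift given by the second coordinate *)
  set (word c := let w := word_of_code l (fst (of_nat c)) in
                 if excluded_middle_informative (L w) then w else s).
  assert (Hword : forall c, L (word c)).
  { intro c. unfold word. destruct (excluded_middle_informative _); auto. }
  destruct (choice (fun c P => block_ok G P /\ sync_tile L s (bword P) /\
              forall b j a, nth_error (word c) j = Some a ->
                coded_point G P b (Z.of_nat j - Z.of_nat (snd (of_nat c))) = a))
    as [Pc HPc].
  { intro c. apply block_exists; auto. }
  exists Pc. split; [intro c; destruct (HPc c) as [? [? _]]; auto|].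
  intros u h Hu. destruct (word_of_code_surj l Hl u) as [cw Hcw].
  exists (to_nat (cw, h)). destruct (HPc (to_nat (cw, h))) as [_ [_ H]].
  unfold word in H. rewrite cancel_of_to in H. cbn in H. rewrite Hcw in H.
  destruct (excluded_middle_informative _); [exact H | contradiction].
Qed.

(** * Scrambled families in an abstract shift space *)

Lemma window_shift {A} (g : Z -> A) c a len :
  window (fun i => g (i + c)%Z) a len = window g (a + c) len.
Proof. unfold window. apply map_ext. intro i. f_equal. lia. Qed.

(* The shift space is described through an embedding [embed] of Z-indexed
   sequences into its points, compatible with the shift and the metric, and
   through windows [win x W] of its points that control the distance to [x]. *)
Section ShiftSpace.
Context {A Pt : Type} (d : Pt -> Pt -> R) (f : Pt -> Pt) (X : Pt -> Prop)
        (L : list A -> Prop) (s : list A)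
        (embed : (Z -> A) -> Pt) (win : Pt -> nat -> list A) (centre : nat -> nat).

Hypothesis embed_iter : forall n g, Nat.iter n f (embed g) = embed (fun i => g (i + Z.of_nat n)%Z).
Hypothesis embed_dist_le : forall g g' m,
  (forall i, (Z.abs i < Z.of_nat m)%Z -> g i = g' i) -> d (embed g) (embed g') <= (/2)^m.
Hypothesis embed_dist_lt : forall g g' m, d (embed g) (embed g') < (/2)^m ->
  forall i, (i <= m)%nat -> g (Z.of_nat i) = g' (Z.of_nat i).
Hypothesis embed_legal : forall g,
  (forall m : nat, L (window g (- Z.of_nat m) (2 * m))) -> X (embed g).
Hypothesis win_legal : forall x W, X x -> L (win x W).
Hypothesis win_dist : forall x g W,
  (forall j a, nth_error (win x W) j = Some a -> g (Z.of_nat j - Z.of_nat (centre W))%Z = a) ->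
  d x (embed g) <= (/2)^W.
Hypothesis win_separates : forall x y, x <> y -> exists W0, forall W, (W0 <= W)%nat ->
  exists j a1 a2, nth_error (win x W) j = Some a1 /\ nth_error (win y W) j = Some a2 /\ a1 <> a2.
Hypotheses (L_factor : factor_closed L) (L_mixing : mixing_language L) (s_sync : sync_word L s).

Lemma embed_eq_agree g g' : embed g = embed g' -> forall i : nat, g (Z.of_nat i) = g' (Z.of_nat i).
Proof.
  intros E i. apply (embed_dist_lt g g' (S i)); [|lia]. rewrite E.
  eapply Rle_lt_trans; [apply (embed_dist_le g' g' (S (S i))); auto|].
  simpl. pose proof (half_pow_pos i). lra.
Qed.

Section Family.
Variables (G : tiles A) (Pc : nat -> block A).
Hypotheses (HG : tiles_ok G) (HGs : tiles_sync L s G) (HZ : markers_differ G)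
  (HPc : forall c, block_ok G (Pc c) /\ sync_tile L s (bword (Pc c))).

Definition coded (c j : nat) (p : nat -> bool) (i : Z) : A :=
  coded_point G (Pc c) (label c p) (i + Z.of_nat j * Z.of_nat (tk G))%Z.

Definition member (c j : nat) (p : nat -> bool) : Pt := embed (coded c j p).

Definition family (x : Pt) : Prop := exists c j p, x = member c j p.

Lemma member_in_X c j p : X (member c j p).
Proof.
  apply embed_legal. intro m. unfold coded. rewrite window_shift.
  destruct (HPc c) as [HP HB]. set (M := (m + j * tk G)%nat).
  apply (window_sub L _ (- Z.of_nat M) (2 * M)); auto; try lia.
  apply (coded_point_legal L s); auto.
Qed.

(* Shifting by one tile length moves to the next tile offset; hence the family
   is invariant under [f^k]. *)
Lemma member_shift c j p : Nat.iter (tk G) f (member c j p) = member c (S j) p.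
Proof.
  unfold member. rewrite embed_iter. f_equal. apply functional_extensionality. intro i.
  unfold coded. f_equal. lia.
Qed.

Lemma members_differ c1 j1 p1 c2 j2 p2 :
  member c1 j1 p1 <> member c2 j2 p2 -> j1 <> j2 \/ (c1, p1) <> (c2, p2).
Proof.
  intro Hne. destruct (Nat.eq_dec j1 j2); auto. right. intro E. inversion E. subst. auto.
Qed.

Lemma members_show_markers c1 j1 p1 c2 j2 p2 :
  (j1 <> j2 \/ (c1, p1) <> (c2, p2)) -> forall N : nat, exists t : nat, (N <= t)%nat /\
  forall r, (r < tk G)%nat ->
    coded c1 j1 p1 (Z.of_nat (t * tk G + r)) = nth r (tZ1 G) (tdef G) /\
    coded c2 j2 p2 (Z.of_nat (t * tk G + r)) = nth r (tZ2 G) (tdef G).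
Proof.
  intros Hd N.
  destruct (marker_tiles_apart G (Pc c1) (Pc c2) (label c1 p1) (label c2 p2) j1 j2 (Z.of_nat N))
    as [t [Ht [E1 [E2 [T1 T2]]]]].
  { destruct Hd; auto. right. apply label_differ; auto. }
  exists (Z.to_nat t). split; [lia|]. intros r Hr. unfold coded.
  replace (Z.of_nat (Z.to_nat t * tk G + r) + Z.of_nat j1 * Z.of_nat (tk G))%Z with
    ((t + Z.of_nat j1) * Z.of_nat (tk G) + Z.of_nat r)%Z by nia.
  replace (Z.of_nat (Z.to_nat t * tk G + r) + Z.of_nat j2 * Z.of_nat (tk G))%Z with
    ((t + Z.of_nat j2) * Z.of_nat (tk G) + Z.of_nat r)%Z by nia.
  rewrite !coded_point_tail; try lia. rewrite E1, E2, Nat2Z.id. auto.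
Qed.

Lemma member_param_inj c j p q : member c j p = member c j q -> p = q.
Proof.
  intro E. apply NNPP. intro Hpq. destruct HZ as [r0 [Hr0 Hd]].
  destruct (members_show_markers c j p c j q ltac:(right; congruence) 0) as [t [_ Ht]].
  destruct (Ht r0 Hr0) as [E1 E2]. apply Hd. rewrite <- E1, <- E2.
  apply embed_eq_agree; auto.
Qed.

Lemma member_continuous c j p (e : R) : e > 0 ->
  exists N, forall q, agree_cantor N p q -> d (member c j p) (member c j q) < e.
Proof.
  intro He. destruct (half_pow_small e He) as [W HW]. pose proof HG as [Hk _].
  exists (W + j + 1)%nat. intros q Hq.
  enough (d (member c j p) (member c j q) <= (/2)^W) by lra.
  apply embed_dist_le. intros i Hi. unfold coded. apply coded_point_local. intros n Hn.
  apply (label_agree c p q (W + j + 1)); auto.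
  assert ((i + Z.of_nat j * Z.of_nat (tk G)) / Z.of_nat (tk G) <= Z.abs i + Z.of_nat j)%Z.
  { rewrite Z.div_add by lia. assert (i / Z.of_nat (tk G) <= Z.abs i)%Z.
    { apply Z.div_le_upper_bound; nia. } lia. }
  lia.
Qed.

Lemma member_param_continuous c j p N :
  exists e, e > 0 /\ forall q, d (member c j p) (member c j q) < e -> agree_cantor N p q.
Proof.
  pose proof HG as [Hk _]. induction N.
  - exists 1. split; [lra|]. intros q _ i Hi. lia.
  - destruct IHN as [e1 [He1 H1]].
    destruct (bit_readable G (Pc c) j (c + 1 + N) HZ) as [t Ht].
    exists (Rmin e1 ((/2)^((t + 1) * tk G))). split.
    { apply Rmin_glb_lt; auto. apply half_pow_pos. }
    intros q Hq i Hi. destruct (Nat.lt_ge_cases i N).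
    + apply H1; auto. eapply Rlt_le_trans; eauto. apply Rmin_l.
    + assert (i = N) by lia. subst i.
      rewrite <- (label_param c p N), <- (label_param c q N). apply Ht. intros r Hr.
      assert (Hd : d (member c j p) (member c j q) < (/2)^((t + 1) * tk G)).
      { eapply Rlt_le_trans; eauto. apply Rmin_r. }
      pose proof (embed_dist_lt _ _ _ Hd (t * tk G + Z.to_nat r)%nat ltac:(nia)) as E.
      unfold coded in E.
      replace (Z.of_nat (t * tk G + Z.to_nat r) + Z.of_nat j * Z.of_nat (tk G))%Z with
        ((Z.of_nat t + Z.of_nat j) * Z.of_nat (tk G) + r)%Z in E by lia. auto.
Qed.

Lemma family_mycielski : mycielski d family.
Proof.
  exists (fun n x => exists p, x = member (fst (of_nat n)) (snd (of_nat n)) p). split.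
  - intro n. exists (member (fst (of_nat n)) (snd (of_nat n))). split; [|split; [|split]].
    + intros p q E. eapply member_param_inj; eauto.
    + intro x. split; intros [p Hp]; exists p; auto.
    + intros p e He. apply member_continuous; auto.
    + intros p N. apply member_param_continuous.
  - intro x. split.
    + intros [c [j [p ->]]]. exists (to_nat (c, j)). rewrite cancel_of_to. simpl. eauto.
    + intros [n [p ->]]. unfold family. eauto.
Qed.

Lemma members_proximal c1 j1 p1 c2 j2 p2 : synd_proximal d f (member c1 j1 p1) (member c2 j2 p2).
Proof.
  intros e He B HB. destruct (half_pow_small e He) as [W HW].
  destruct (coded_points_meet G (Pc c1) (Pc c2) (label c1 p1) (label c2 p2) j1 j2 W B HG HB)
    as [n [Hn Ha]].
  exists n. split; auto. unfold member. rewrite !embed_iter.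
  enough (d (embed (fun i => coded c1 j1 p1 (i + Z.of_nat n)))
            (embed (fun i => coded c2 j2 p2 (i + Z.of_nat n))) <= (/2)^W) by lra.
  apply embed_dist_le. intros i Hi. unfold coded.
  replace (i + Z.of_nat n)%Z with (Z.of_nat n + i)%Z by lia. apply Ha. lia.
Qed.

Lemma members_not_asymptotic c1 j1 p1 c2 j2 p2 :
  member c1 j1 p1 <> member c2 j2 p2 -> ~ asymptotic d f (member c1 j1 p1) (member c2 j2 p2).
Proof.
  intros Hne Has. destruct HZ as [r0 [Hr0 Hd]].
  destruct (Has ((/2)^(tk G)) (half_pow_pos _)) as [N HN].
  destruct (members_show_markers c1 j1 p1 c2 j2 p2 (members_differ _ _ _ _ _ _ Hne) N)
    as [t [Ht Htt]].
  specialize (HN (t * tk G)%nat ltac:(pose proof HG as [Hk _]; nia)).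
  unfold member in HN. rewrite !embed_iter in HN.
  pose proof (embed_dist_lt _ _ _ HN r0 ltac:(lia)) as E.
  destruct (Htt r0 Hr0) as [E1 E2]. apply Hd. rewrite <- E1, <- E2.
  rewrite Nat2Z.inj_add, Z.add_comm. exact E.
Qed.

Lemma family_scrambled : synd_scrambled d f family.
Proof.
  split.
  - exists (member 0 0 (fun _ => false)), (member 0 0 (fun _ => true)).
    split; [unfold family; eauto|split; [unfold family; eauto|]].
    intro E. apply member_param_inj in E. apply (f_equal (fun p => p 0%nat)) in E. discriminate.
  - intros x y [c1 [j1 [p1 ->]]] [c2 [j2 [p2 ->]]] Hne. split.
    + apply members_proximal.
    + apply members_not_asymptotic; auto.
Qed.

(* Density: a block placing the window [win x W] at its centre puts a member
   within [(/2)^W] of [x]. *)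
Lemma family_dense :
  (forall u h, L u -> exists c, forall b j a, nth_error u j = Some a ->
     coded_point G (Pc c) b (Z.of_nat j - Z.of_nat h) = a) ->
  dense_in d X family.
Proof.
  intro Hdense. split; [intros x [c [j [p ->]]]; apply member_in_X|].
  intros x Hx e He. destruct (half_pow_small e He) as [W HW].
  destruct (Hdense (win x W) (centre W) (win_legal x W Hx)) as [c Hc].
  exists (member c 0 (fun _ => false)). split; [unfold family; eauto|].
  enough (d x (member c 0 (fun _ => false)) <= (/2)^W) by lra.
  apply win_dist. intros j a Hj. unfold coded. rewrite <- (Hc (label c (fun _ => false)) j a Hj).
  f_equal. lia.
Qed.

(* Two distinct members are simultaneously close to [z] and [z'] infinitely
   often: whenever they show the marker tiles, which carry windows of [z], [z']. *)
Lemma family_visits z z' o K :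
  occurs_at (win z K) (tZ1 G) o -> occurs_at (win z' K) (tZ2 G) o ->
  forall x x', family x -> family x' -> x <> x' ->
  exists M : nat -> Prop, infinite_nat M /\ forall n, M n ->
    d z (Nat.iter n f x) <= (/2)^K /\ d z' (Nat.iter n f x') <= (/2)^K.
Proof.
  intros Hz Hz' x x' [c1 [j1 [p1 ->]]] [c2 [j2 [p2 ->]]] Hne.
  pose proof (members_differ _ _ _ _ _ _ Hne) as Hlab. pose proof HG as [Hk [_ [H1l H2l]]].
  exists (fun n => exists t, n = (t * tk G + o + centre K)%nat /\ forall r, (r < tk G)%nat ->
    coded c1 j1 p1 (Z.of_nat (t * tk G + r)) = nth r (tZ1 G) (tdef G) /\
    coded c2 j2 p2 (Z.of_nat (t * tk G + r)) = nth r (tZ2 G) (tdef G)). split.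
  - intro N. destruct (members_show_markers c1 j1 p1 c2 j2 p2 Hlab N) as [t [Ht Htt]].
    exists (t * tk G + o + centre K)%nat. split; [nia|eauto].
  - intros n [t [-> Htt]]. unfold member. rewrite !embed_iter.
    split; apply win_dist; intros j a Hj.
    + pose proof (Hz j a Hj) as E. assert (o + j < tk G)%nat by (rewrite <- H1l; apply nth_error_Some; congruence).
      rewrite <- (nth_error_nth _ _ (tdef G) E), <- (proj1 (Htt (o + j)%nat ltac:(lia))). f_equal. lia.
    + pose proof (Hz' j a Hj) as E. assert (o + j < tk G)%nat by (rewrite <- H2l; apply nth_error_Some; congruence).
      rewrite <- (nth_error_nth _ _ (tdef G) E), <- (proj2 (Htt (o + j)%nat ltac:(lia))). f_equal. lia.
Qed.

End Family.

Theorem scrambled_family_exists (z z' : Pt) (delta : R) :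
  finite_type A -> X z -> X z' -> z <> z' -> delta > 0 ->
  exists S : Pt -> Prop,
    dense_in d X S /\ mycielski d S /\ synd_scrambled d f S /\
    (exists k : nat, (1 <= k)%nat /\ forall x, S x -> S (Nat.iter k f x)) /\
    (forall x x', S x -> S x' -> x <> x' ->
       exists M : nat -> Prop, infinite_nat M /\
         forall n, M n -> d z (Nat.iter n f x) < delta /\ d z' (Nat.iter n f x') < delta).
Proof.
  intros [l Hl] Hz Hz' Hne Hdel.
  destruct (win_separates z z' Hne) as [W0 HW0].
  destruct (half_pow_small delta Hdel) as [K0 HK0].
  (* windows of size [K] are fine enough for [delta] and separate [z] from [z'] *)
  set (K := (K0 + W0)%nat).
  assert (HK : (/2)^K < delta) by (pose proof (half_pow_le K0 K ltac:(lia)); lra).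
  destruct (HW0 K ltac:(lia)) as [j [a1 [a2 Hsep]]].
  destruct (marker_tiles_exist L s (win z K) (win z' K) a1 L_factor L_mixing s_sync
              (win_legal z K Hz) (win_legal z' K Hz') ltac:(exists j, a1, a2; exact Hsep))
    as [G [o [HG [HGs [HZ [Ho Ho']]]]]].
  destruct (dense_blocks l L s G Hl L_factor L_mixing s_sync HG) as [Pc [HPc Hdense]].
  exists (family G Pc). split; [|split; [|split; [|split]]].
  - apply family_dense; auto.
  - apply family_mycielski; auto.
  - apply family_scrambled; auto.
  - exists (tk G). split; [apply HG|]. intros x [c [j' [p ->]]].
    rewrite member_shift. unfold family. eauto.
  - intros x x' Hx Hx' Hxx'.
    destruct (family_visits G Pc HG z z' o K Ho Ho' x x' Hx Hx' Hxx') as [M [HM HMd]].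
    exists M. split; auto. intros n Hn. destruct (HMd n Hn). split; lra.
Qed.

End ShiftSpace.

(** * The one-sided shift *)

Lemma dist1_spec {A : Type} (x y : nat -> A) :
  ((forall i, x i = y i) /\ dist1 x y = 0) \/
  (exists k : nat, (forall i, (i < k)%nat -> x i = y i) /\ x k <> y k /\ dist1 x y = (/2) ^ k).
Proof.
  unfold dist1. apply epsilon_spec.
  destruct (classic (forall i, x i = y i)) as [H|H].
  - exists 0. left. auto.
  - apply not_all_ex_not in H. apply least_witness in H as [k [Hk1 Hk2]].
    exists ((/2)^k). right. exists k. repeat split; auto.
    intros i Hi. apply NNPP. auto.
Qed.

Lemma dist1_le {A : Type} (x y : nat -> A) (m : nat) :
  (forall i, (i < m)%nat -> x i = y i) -> dist1 x y <= (/2)^m.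
Proof.
  intro H. destruct (dist1_spec x y) as [[_ E]|[k [H1 [H2 E]]]]; rewrite E.
  - left. apply half_pow_pos.
  - apply half_pow_le. destruct (Nat.lt_ge_cases k m); auto. exfalso. auto.
Qed.

Lemma dist1_lt {A : Type} (x y : nat -> A) (m : nat) :
  dist1 x y < (/2)^m -> forall i, (i <= m)%nat -> x i = y i.
Proof.
  intros H i Hi. destruct (dist1_spec x y) as [[E _]|[k [H1 [H2 E]]]]; auto.
  rewrite E in H. apply H1. destruct (Nat.lt_ge_cases m k). lia.
  pose proof (half_pow_le k m H0). lra.
Qed.

Lemma iter_shift1 {A : Type} (n : nat) (x : nat -> A) :
  Nat.iter n shift1 x = fun i => x (n + i)%nat.
Proof.
  induction n; simpl; [reflexivity|]. rewrite IHn. unfold shift1.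
  apply functional_extensionality. intro i. f_equal. lia.
Qed.

(* One-sided sequences are viewed as Z-indexed ones, constant on the negatives. *)
Definition extend1 {A : Type} (x : nat -> A) (i : Z) : A := x (Z.to_nat i).

Lemma window_extend1_nth {A : Type} (x : nat -> A) a len j :
  nth_error (window (extend1 x) (Z.of_nat a) len) j =
    if (j <? len)%nat then Some (x (a + j)%nat) else None.
Proof. rewrite window_nth. unfold extend1. destruct (j <? len)%nat; auto. do 2 f_equal. lia. Qed.

Lemma occurs1_window {A : Type} (x : nat -> A) a len :
  occurs1 (window (extend1 x) (Z.of_nat a) len) x a.
Proof.
  intros j b H. rewrite window_extend1_nth in H. destruct (Nat.ltb_spec j len); congruence.
Qed.

Section OneSided.
Context {A : Type} (X : (nat -> A) -> Prop) (HX : subshift1 X).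

Lemma lang1_factor : factor_closed (lang1 X).
Proof.
  intros u w v [x [i [Hx Hw]]]. exists x, (i + length u)%nat. split; auto.
  intros j a Hj. rewrite <- Nat.add_assoc. apply Hw.
  rewrite nth_error_app2 by lia. replace (length u + j - length u)%nat with j by lia.
  rewrite nth_error_app1; auto. apply nth_error_Some. congruence.
Qed.

Lemma lang1_point w : lang1 X w -> exists y, X y /\ occurs1 w y 0.
Proof.
  intros [x [i [Hx Hw]]]. exists (Nat.iter i shift1 x). split.
  - destruct HX as [_ Hs]. clear Hw. induction i; simpl; auto.
  - rewrite iter_shift1. intros j a Hj. simpl. apply Hw; auto.
Qed.

Lemma cylinder1_open w : open_in dist1 X (fun y => X y /\ occurs1 w y 0).
Proof.
  split; [intros x [Hx _]; auto|].
  intros x [Hx Hw]. exists ((/2)^(length w)). split; [apply half_pow_pos|].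
  intros y Hy Hd. split; auto. intros j a Hj. pose proof (dist1_lt x y _ Hd j) as E.
  assert (j < length w)%nat by (apply nth_error_Some; congruence).
  simpl. rewrite <- E by lia. apply (Hw j a Hj).
Qed.

Lemma lang1_mixing : mixing dist1 shift1 X -> mixing_language (lang1 X).
Proof.
  intros Hm u v Hu Hv.
  destruct (lang1_point u Hu) as [yu [Hyu Hyu']].
  destruct (lang1_point v Hv) as [yv [Hyv Hyv']].
  destruct (Hm _ _ (cylinder1_open u) (cylinder1_open v)) as [N HN];
    [exists yu; auto | exists yv; auto |].
  exists N. intros n Hn Hun. destruct (HN n Hn) as [x [[Hx Hxu] [_ Hxv]]].
  rewrite iter_shift1 in Hxv.
  exists (window (extend1 x) (Z.of_nat 0) (n + length v)).
  split; [exists x, 0%nat; split; auto; apply occurs1_window|split; [|split]].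
  - intros j a Hj. rewrite window_extend1_nth.
    assert (j < length u)%nat by (apply nth_error_Some; congruence).
    simpl. destruct (Nat.ltb_spec j (n + length v)); try lia. rewrite <- (Hxu j a Hj). auto.
  - intros j a Hj. rewrite window_extend1_nth.
    assert (j < length v)%nat by (apply nth_error_Some; congruence).
    simpl. destruct (Nat.ltb_spec (n + j) (n + length v)); try lia. rewrite <- (Hxv j a Hj). auto.
  - apply window_length.
Qed.

Lemma embed1_legal (g : Z -> A) :
  (forall m : nat, lang1 X (window g (- Z.of_nat m) (2 * m))) -> X (fun n => g (Z.of_nat n)).
Proof.
  intros H. destruct HX as [Hc _]. apply Hc. intros e He.
  destruct (half_pow_small e He) as [m Hm].
  assert (Hw : lang1 X (window g 0 m)).
  { apply (window_sub _ g (- Z.of_nat m) (2 * m)); auto; [apply lang1_factor | lia | lia]. }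
  destruct (lang1_point _ Hw) as [y [Hy Hocc]]. exists y. split; auto.
  enough (dist1 (fun n => g (Z.of_nat n)) y <= (/2)^m) by lra.
  apply dist1_le. intros i Hi. symmetry. apply (Hocc i). rewrite window_nth.
  destruct (Nat.ltb_spec i m); [auto | lia].
Qed.

End OneSided.

(* The one-sided case: windows are prefixes [x_0 ... x_(W-1)], and a
   one-sided point is the restriction of a Z-indexed sequence to [nat]. *)
Theorem one_sided_case (A : Type) (X : (nat -> A) -> Prop) (z z' : nat -> A) (delta : R) :
  finite_type A -> synchronizing1 X -> mixing dist1 shift1 X ->
  X z -> X z' -> z <> z' -> delta > 0 ->
  exists S : (nat -> A) -> Prop,
    dense_in dist1 X S /\ mycielski dist1 S /\ synd_scrambled dist1 shift1 S /\
    (exists k : nat, (1 <= k)%nat /\ forall x, S x -> S (Nat.iter k shift1 x)) /\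
    (forall x x', S x -> S x' -> x <> x' ->
       exists M : nat -> Prop, infinite_nat M /\
         forall n, M n -> dist1 z (Nat.iter n shift1 x) < delta /\
                          dist1 z' (Nat.iter n shift1 x') < delta).
Proof.
  intros HA [HX [_ [s Hs]]] Hmix.
  apply (scrambled_family_exists dist1 shift1 X (lang1 X) s (fun g n => g (Z.of_nat n))
           (fun x W => window (extend1 x) (Z.of_nat 0) W) (fun _ => 0%nat)); auto.
  - intros n g. rewrite iter_shift1. apply functional_extensionality. intro i. f_equal. lia.
  - intros g g' m H. apply dist1_le. intros i Hi. apply H. lia.
  - intros g g' m H i Hi. exact (dist1_lt _ _ m H i Hi).
  - apply embed1_legal; auto.
  - intros x W Hx. exists x, 0%nat. split; auto. apply occurs1_window.
  - intros x g W H. apply dist1_le. intros i Hi. symmetry. rewrite <- (H i (x i)); [f_equal; lia|].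
    rewrite window_extend1_nth. destruct (Nat.ltb_spec i W); [auto | lia].
  -
    intros x y Hxy. destruct (not_all_ex_not _ _ (fun H => Hxy (functional_extensionality _ _ H)))
      as [d0 Hd0].
    exists (S d0). intros W HW. exists d0, (x d0), (y d0).
    rewrite !window_extend1_nth. destruct (Nat.ltb_spec d0 W); [auto | lia].
  - apply lang1_factor.
  - apply lang1_mixing; auto.
Qed.

(** * The two-sided shift *)

Lemma dist2_spec {A : Type} (x y : Z -> A) :
  ((forall i, x i = y i) /\ dist2 x y = 0) \/
  (exists k : nat, (forall i, (Z.abs i < Z.of_nat k)%Z -> x i = y i) /\
       (x (Z.of_nat k) <> y (Z.of_nat k) \/ x (- Z.of_nat k)%Z <> y (- Z.of_nat k)%Z) /\
       dist2 x y = (/2) ^ k).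
Proof.
  unfold dist2. apply epsilon_spec.
  destruct (classic (forall i, x i = y i)) as [H|H]; [exists 0; left; auto|].
  set (Q := fun k : nat => x (Z.of_nat k) <> y (Z.of_nat k) \/ x (- Z.of_nat k)%Z <> y (- Z.of_nat k)%Z).
  assert (HQ : forall i, x i <> y i -> Q (Z.abs_nat i)).
  { intros i Hi. unfold Q. rewrite Nat2Z.inj_abs_nat.
    destruct (Z.abs_spec i) as [[? ->]|[? ->]]; [left | right; rewrite Z.opp_involutive]; auto. }
  destruct (not_all_ex_not _ _ H) as [i0 Hi0].
  destruct (least_witness Q (ex_intro _ _ (HQ i0 Hi0))) as [k [Hk1 Hk2]].
  exists ((/2)^k). right. exists k. repeat split; auto.
  intros i Hi. apply NNPP. intro Hne. apply (Hk2 (Z.abs_nat i)); [lia | auto].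
Qed.

Lemma dist2_le {A : Type} (x y : Z -> A) (m : nat) :
  (forall i, (Z.abs i < Z.of_nat m)%Z -> x i = y i) -> dist2 x y <= (/2)^m.
Proof.
  intro H. destruct (dist2_spec x y) as [[_ E]|[k [H1 [H2 E]]]]; rewrite E.
  - left. apply half_pow_pos.
  - apply half_pow_le. destruct (Nat.lt_ge_cases k m); auto. exfalso.
    destruct H2 as [H2|H2]; apply H2; apply H; lia.
Qed.

Lemma dist2_lt {A : Type} (x y : Z -> A) (m : nat) :
  dist2 x y < (/2)^m -> forall i, (Z.abs i <= Z.of_nat m)%Z -> x i = y i.
Proof.
  intros H i Hi. destruct (dist2_spec x y) as [[E _]|[k [H1 [H2 E]]]]; auto.
  rewrite E in H. apply H1. destruct (Nat.lt_ge_cases m k). lia.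
  pose proof (half_pow_le k m H0). lra.
Qed.

Lemma iter_shift2 {A : Type} (n : nat) (x : Z -> A) :
  Nat.iter n shift2 x = fun i => x (i + Z.of_nat n)%Z.
Proof.
  induction n; simpl.
  - apply functional_extensionality. intro i. f_equal. lia.
  - rewrite IHn. unfold shift2. apply functional_extensionality. intro i. f_equal. lia.
Qed.

Lemma occurs2_window {A : Type} (x : Z -> A) a len : occurs2 (window x a len) x a.
Proof. intros j b H. rewrite window_nth in H. destruct (Nat.ltb_spec j len); congruence. Qed.

Section TwoSided.
Context {A : Type} (X : (Z -> A) -> Prop) (HX : subshift2 X).

Lemma subshift2_translate x c : X x -> X (fun i => x (i + c)%Z).
Proof.
  intros Hx. destruct HX as [_ H].
  assert (Hn : forall n : nat, X (fun i => x (i + Z.of_nat n)%Z) /\ X (fun i => x (i - Z.of_nat n)%Z)).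
  { induction n as [|n [H1 H2]].
    - simpl. replace (fun i => x (i + 0)%Z) with x; [replace (fun i => x (i - 0)%Z) with x; [auto|]|];
        apply functional_extensionality; intro i; f_equal; lia.
    - split.
      + replace (fun i => x (i + Z.of_nat (S n))%Z) with (shift2 (fun i => x (i + Z.of_nat n)%Z));
          [apply H; auto|].
        apply functional_extensionality; intro i; unfold shift2; f_equal; lia.
      + replace (fun i => x (i - Z.of_nat (S n))%Z) with (fun i => x (i - 1 - Z.of_nat n)%Z);
          [apply (H _ H2)|].
        apply functional_extensionality; intro i; f_equal; lia. }
  destruct (Z_le_gt_dec 0 c).
  - replace c with (Z.of_nat (Z.to_nat c)) by lia. apply Hn.
  - replace (fun i => x (i + c)%Z) with (fun i => x (i - Z.of_nat (Z.to_nat (- c)))%Z); [apply Hn|].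
    apply functional_extensionality; intro i; f_equal; lia.
Qed.

Lemma lang2_factor : factor_closed (lang2 X).
Proof.
  intros u w v [x [i [Hx Hw]]]. exists x, (i + Z.of_nat (length u))%Z. split; auto.
  intros j a Hj. rewrite <- Z.add_assoc, <- Nat2Z.inj_add. apply Hw.
  rewrite nth_error_app2 by lia. replace (length u + j - length u)%nat with j by lia.
  rewrite nth_error_app1; auto. apply nth_error_Some. congruence.
Qed.

Lemma lang2_point w a : lang2 X w -> exists y, X y /\ occurs2 w y a.
Proof.
  intros [x [i [Hx Hw]]]. exists (fun p => x (p + (i - a))%Z). split.
  - apply subshift2_translate; auto.
  - intros j b Hj. rewrite <- (Hw j b Hj). f_equal. lia.
Qed.

Lemma cylinder2_open w : open_in dist2 X (fun y => X y /\ occurs2 w y 0).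
Proof.
  split; [intros x [Hx _]; auto|].
  intros x [Hx Hw]. exists ((/2)^(length w)). split; [apply half_pow_pos|].
  intros y Hy Hd. split; auto. intros j a Hj. pose proof (dist2_lt x y _ Hd (Z.of_nat j)) as E.
  assert (j < length w)%nat by (apply nth_error_Some; congruence).
  simpl. rewrite <- E by lia. apply (Hw j a Hj).
Qed.

Lemma lang2_mixing : mixing dist2 shift2 X -> mixing_language (lang2 X).
Proof.
  intros Hm u v Hu Hv.
  destruct (lang2_point u 0 Hu) as [yu [Hyu Hyu']].
  destruct (lang2_point v 0 Hv) as [yv [Hyv Hyv']].
  destruct (Hm _ _ (cylinder2_open u) (cylinder2_open v)) as [N HN];
    [exists yu; auto | exists yv; auto |].
  exists N. intros n Hn Hun. destruct (HN n Hn) as [x [[Hx Hxu] [_ Hxv]]].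
  rewrite iter_shift2 in Hxv.
  exists (window x 0 (n + length v)).
  split; [exists x, 0%Z; split; auto; apply occurs2_window|split; [|split]].
  - intros j a Hj. rewrite window_nth.
    assert (j < length u)%nat by (apply nth_error_Some; congruence).
    simpl. destruct (Nat.ltb_spec j (n + length v)); try lia. rewrite <- (Hxu j a Hj). auto.
  - intros j a Hj. rewrite window_nth.
    assert (j < length v)%nat by (apply nth_error_Some; congruence).
    simpl. destruct (Nat.ltb_spec (n + j) (n + length v)); try lia. rewrite <- (Hxv j a Hj).
    do 2 f_equal. lia.
  - apply window_length.
Qed.

Lemma legal_windows_in_X (g : Z -> A) :
  (forall m : nat, lang2 X (window g (- Z.of_nat m) (2 * m))) -> X g.
Proof.
  intros H. pose proof HX as [Hc _]. apply Hc. intros e He.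
  destruct (half_pow_small e He) as [m Hm].
  destruct (lang2_point _ (- Z.of_nat m) (H m)) as [y [Hy Hocc]]. exists y. split; auto.
  enough (dist2 g y <= (/2)^m) by lra.
  apply dist2_le. intros i Hi.
  replace i with (- Z.of_nat m + Z.of_nat (Z.to_nat (i + Z.of_nat m)))%Z by lia.
  symmetry. apply Hocc. rewrite window_nth.
  destruct (Nat.ltb_spec (Z.to_nat (i + Z.of_nat m)) (2 * m)); [auto | lia].
Qed.

End TwoSided.

Definition central_window {A : Type} (x : Z -> A) (W : nat) : list A :=
  window x (- Z.of_nat W) (2 * W + 1).

Theorem two_sided_case (A : Type) (X : (Z -> A) -> Prop) (z z' : Z -> A) (delta : R) :
  finite_type A -> synchronizing2 X -> mixing dist2 shift2 X ->
  X z -> X z' -> z <> z' -> delta > 0 ->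
  exists S : (Z -> A) -> Prop,
    dense_in dist2 X S /\ mycielski dist2 S /\ synd_scrambled dist2 shift2 S /\
    (exists k : nat, (1 <= k)%nat /\ forall x, S x -> S (Nat.iter k shift2 x)) /\
    (forall x x', S x -> S x' -> x <> x' ->
       exists M : nat -> Prop, infinite_nat M /\
         forall n, M n -> dist2 z (Nat.iter n shift2 x) < delta /\
                          dist2 z' (Nat.iter n shift2 x') < delta).
Proof.
  intros HA [HX [_ [s Hs]]] Hmix.
  apply (scrambled_family_exists dist2 shift2 X (lang2 X) s (fun g => g)
           central_window (fun W => W)); auto.
  - intros n g. apply iter_shift2.
  - intros g g' m H. apply dist2_le. auto.
  - intros g g' m H i Hi. apply (dist2_lt _ _ m H). lia.
  - apply legal_windows_in_X; auto.
  - intros x W Hx. exists x, (- Z.of_nat W)%Z. split; auto. apply occurs2_window.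
  - intros x g W H. apply dist2_le. intros i Hi.
    rewrite <- (H (Z.to_nat (i + Z.of_nat W)) (x i)); [f_equal; lia|].
    unfold central_window. rewrite window_nth.
    destruct (Nat.ltb_spec (Z.to_nat (i + Z.of_nat W)) (2 * W + 1)); [|lia]. do 2 f_equal. lia.
  -
    intros x y Hxy. destruct (not_all_ex_not _ _ (fun H => Hxy (functional_extensionality _ _ H)))
      as [d0 Hd0].
    exists (Z.abs_nat d0). intros W HW. exists (Z.to_nat (d0 + Z.of_nat W)), (x d0), (y d0).
    unfold central_window. rewrite !window_nth.
    destruct (Nat.ltb_spec (Z.to_nat (d0 + Z.of_nat W)) (2 * W + 1)); [|lia].
    replace (- Z.of_nat W + Z.of_nat (Z.to_nat (d0 + Z.of_nat W)))%Z with d0 by lia. auto.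
  - apply lang2_factor.
  - apply lang2_mixing; auto.
Qed.

Theorem theorem4p10 :
  (* one-sided case *)
  (forall (A : Type) (X : (nat -> A) -> Prop) (z z' : nat -> A) (delta : R),
     finite_type A -> synchronizing1 X -> mixing dist1 shift1 X ->
     X z -> X z' -> z <> z' -> delta > 0 ->
     exists S : (nat -> A) -> Prop,
       dense_in dist1 X S /\ mycielski dist1 S /\ synd_scrambled dist1 shift1 S /\
       (exists k : nat, (1 <= k)%nat /\ forall x, S x -> S (Nat.iter k shift1 x)) /\
       (forall x x', S x -> S x' -> x <> x' ->
          exists M : nat -> Prop, infinite_nat M /\
            forall n, M n -> dist1 z (Nat.iter n shift1 x) < delta /\
                             dist1 z' (Nat.iter n shift1 x') < delta)) /\
  (* two-sided case *)
  (forall (A : Type) (X : (Z -> A) -> Prop) (z z' : Z -> A) (delta : R),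
     finite_type A -> synchronizing2 X -> mixing dist2 shift2 X ->
     X z -> X z' -> z <> z' -> delta > 0 ->
     exists S : (Z -> A) -> Prop,
       dense_in dist2 X S /\ mycielski dist2 S /\ synd_scrambled dist2 shift2 S /\
       (exists k : nat, (1 <= k)%nat /\ forall x, S x -> S (Nat.iter k shift2 x)) /\
       (forall x x', S x -> S x' -> x <> x' ->
          exists M : nat -> Prop, infinite_nat M /\
            forall n, M n -> dist2 z (Nat.iter n shift2 x) < delta /\
                             dist2 z' (Nat.iter n shift2 x') < delta)).
Proof.
  split; [exact one_sided_case | exact two_sided_case].
Qed.
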